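(* Let $\mathcal{U}=\{1,\dots,K\}$ be a set of $K\ge 1$ users (UEs) and let $\mathcal{B}=\mathcal{T}\cup\mathcal{S}$ be a finite set of base stations partitioned into a set $\mathcal{T}$ of terrestrial base stations and a set $\mathcal{S}$ of satellite base stations. Let $x_{ij}\in\{0,1\}$ ($i\in\mathcal{U}$, $j\in\mathcal{B}$) be a fixed association, with each UE associated to exactly one base station ($\sum_{j\in\mathcal{B}}x_{ij}=1$ for every $i$), and let $r_{ij}>0$ be fixed constants not depending on $\varepsilon$. For $\varepsilon\in[0,1]$ define the throughput of UE $i$ as $$R_i(\varepsilon)=\sum_{j\in\mathcal{S}}\varepsilon\,x_{ij}r_{ij}+\sum_{j\in\mathcal{T}}(1-\varepsilon)\,x_{ij}r_{ij},$$ and the utility $f(\varepsilon)=\sum_{i\in\mathcal{U}}\log R_i(\varepsilon)$ (with $\log 0=-\infty$), in which all UEs are weighted equally. Let $K_{\mathcal{S}}$ denote the number of UEs associated to a satellite base station, i.e. $K_{\mathcal{S}}=\#\{i\in\mathcal{U}:\ x_{ij}=1\text{ for some } j\in\mathcal{S}\}$. Then the optimal bandwidth fraction allocated to the satellite tier, i.e. the maximizer of $f$ over $\varepsilon\in[0,1]$, is $$\varepsilon^*=\frac{K_{\mathcal{S}}}{K}.$$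
   Context: Model: a total bandwidth $W$ is split orthogonally, a fraction $\varepsilon$ going to all satellite base stations and a fraction $1-\varepsilon$ to all terrestrial base stations; the quantity $r_{ij}=\frac{W}{k_j}\log_2(1+\gamma_{ij})$ (with $k_j$ the number of UEs served by base station $j$ and $\gamma_{ij}$ the SINR, both independent of $\varepsilon$) is the throughput UE $i$ would obtain from base station $j$ if that base station's tier were given the whole bandwidth. ''All UEs have the same requirements'' corresponds to the unweighted sum of logarithms in $f$. *)

From HB Require Import structures.
From mathcomp Require Import all_boot all_order all_algebra.
From mathcomp Require Import all_classical all_reals all_analysis.
Set Implicit Arguments. Unset Strict Implicit. Unset Printing Implicit Defensive.
Import Order.TTheory GRing.Theory Num.Theory.
Local Open Scope ring_scope.

(* Users are 'I_K, base stations a finType B; [sat j] means j is a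
   satellite BS (j \in S), otherwise terrestrial (j \in T).
   x i j in {0,1} is the association, r i j > 0 the full-band rates. *)

Definition throughput (R : realType) (K : nat) (B : finType) (sat : pred B)
  (x r : 'I_K -> B -> R) (eps : R) (i : 'I_K) : R :=
  \sum_(j | sat j) eps * x i j * r i j
  + \sum_(j | ~~ sat j) (1 - eps) * x i j * r i j.

Definition elog (R : realType) (t : R) : \bar R :=
  if 0 < t then (ln t)%:E else -oo%E.

Definition utility (R : realType) (K : nat) (B : finType) (sat : pred B)
  (x r : 'I_K -> B -> R) (eps : R) : \bar R :=
  (\sum_(i < K) elog (throughput sat x r eps i))%E.

Definition K_sat (R : realType) (K : nat) (B : finType) (sat : pred B)
  (x : 'I_K -> B -> R) : nat :=
  #|[set i : 'I_K | [exists j, sat j && (x i j == 1)]]|.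

(* Each UE is served by exactly one base station, so its throughput is r e or
   r (1 - e) according to the tier of that station, and
   f(e) = const + sum_i log w_i(e) with w_i(e) in {e, 1 - e}.  For p = K_S / K
   every w_i(p) is positive and sum_i w_i(e) / w_i(p) <= K on [0, 1], so
   ln t <= t - 1 at t = w_i(e) / w_i(p) gives f(e) <= f(p), strictly when
   e <> p: this is Gibbs' inequality for the laws (p, 1 - p) and (e, 1 - e). *)

From HB Require Import structures.
From mathcomp Require Import all_boot all_order all_algebra.
From mathcomp Require Import all_classical all_reals all_analysis.
From mathcomp Require Import ring.
Set Implicit Arguments.
Unset Strict Implicit.
Unset Printing Implicit Defensive.
Import Order.TTheory GRing.Theory Num.Theory.
Local Open Scope ring_scope.

Section ExtendedLog.
Variable R : realType.

Lemma ln_lt_subr1 (t : R) : 0 < t -> t != 1 -> ln t < t - 1.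
Proof.
move=> t0 t1; have := @expR_gt1Dx R (ln t).
by rewrite ln_eq0 // lnK ?posrE // ltrBrDl; apply.
Qed.

Lemma elog_mulr (a c : R) : 0 < c -> elog (a * c) = (elog a + (ln c)%:E)%E.
Proof.
move=> c0; rewrite /elog pmulr_lgt0 //.
by case: ifP => // a0; rewrite lnM ?posrE.
Qed.

Lemma elog_lt_ln_sub1 (a b : R) : 0 < b -> a != b ->
  (elog a < (ln b + (a / b - 1))%:E)%E.
Proof.
move=> b0 ab; rewrite /elog; case: ifPn => [a0|_]; last exact: ltNyr.
have ab1 : a / b != 1.
  by apply: contra_neq ab => ab1; rewrite -(divfK (lt0r_neq0 b0) a) ab1 mul1r.
rewrite -[in ln a](divfK (lt0r_neq0 b0) a) lnM ?posrE ?divr_gt0 // lte_fin.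
by rewrite [ln _ + ln b]addrC ltrD2l ln_lt_subr1 ?divr_gt0.
Qed.

Lemma elog_le_ln_sub1 (a b : R) : 0 < b ->
  (elog a <= (ln b + (a / b - 1))%:E)%E.
Proof.
move=> b0; have [->|ab] := eqVneq a b; last exact/ltW/elog_lt_ln_sub1.
by rewrite /elog b0 divff ?lt0r_neq0 // subrr addr0.
Qed.

Lemma lte_leD_fin (a b x y : \bar R) : x \is a fin_num -> y \is a fin_num ->
  (a < x -> b <= y -> a + b < x + y)%E.
Proof.
by move: a b x y => [a| |] [b| |] [x| |] [y| |] //= _ _;
  rewrite ?lte_fin ?lee_fin ?ltNyr //; exact: ltr_leD.
Qed.

Lemma sum_elog_lt (I : finType) (a b : I -> R) :
  (forall i, 0 < b i) -> \sum_i a i / b i <= #|I|%:R ->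
  (exists i, a i != b i) ->
  (\sum_i elog (a i) < (\sum_i ln (b i))%:E)%E.
Proof.
move=> b0 sum_ab [i0 ab_i0].
apply: (@lt_le_trans _ _ (\sum_i (ln (b i) + (a i / b i - 1))%:E)%E).
  rewrite (bigD1 i0) //= [X in (_ < X)%E](bigD1 i0) //=.
  apply: lte_leD_fin; [done | by rewrite sumEFin | exact: elog_lt_ln_sub1 |].
  by apply: lee_sum => i _; apply: elog_le_ln_sub1.
rewrite sumEFin lee_fin big_split /= big_split /= sumrN sumr_const.
by rewrite gerDl subr_le0.
Qed.

End ExtendedLog.

(* An equality unless m = 0, where the left-hand side is 0 since 0^-1 = 0. *)
Lemma mulr_div_ratio_le (F : numFieldType) (m n e : F) :
  0 < n -> 0 <= e -> m * (e / (m / n)) <= e * n.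
Proof.
move=> n0 e0; have [->|m0] := eqVneq m 0.
  by rewrite mul0r mulr_ge0 // ltW.
suff -> : m * (e / (m / n)) = e * n by [].
by field; rewrite m0 lt0r_neq0.
Qed.

Section TierShare.
Variables (R : realType) (I : finType) (s : pred I).
Hypothesis I_gt0 : (0 < #|I|)%N.

Definition share (b : bool) (e : R) : R := if b then e else 1 - e.

Definition share_utility (e : R) : \bar R := (\sum_i elog (share (s i) e))%E.

Definition share_fraction : R := #|s|%:R / #|I|%:R.

Local Notation p := share_fraction.

Lemma share_inj b : injective (share b).
Proof. by case: b => // e e' /addrI /oppr_inj. Qed.

Lemma sum_by_tier (F : bool -> R) :
  \sum_i F (s i) = #|s|%:R * F true + #|[predC s]|%:R * F false.
Proof.
rewrite (bigID s) /= (eq_bigr (fun=> F true)) => [|i ->//].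
rewrite [X in _ + X](eq_bigr (fun=> F false)) => [|i /negbTE -> //].
by rewrite !sumr_const !mulr_natl.
Qed.

Lemma subr1_share_fraction : 1 - p = #|[predC s]|%:R / #|I|%:R.
Proof.
have n0 : #|I|%:R != 0 :> R by rewrite pnatr_eq0 -lt0n.
have n_split : #|I|%:R = #|s|%:R + #|[predC s]|%:R :> R by rewrite -natrD cardC.
by rewrite /p n_split; field; rewrite -n_split.
Qed.

Lemma share_fraction_itv : 0 <= p <= 1.
Proof.
by rewrite divr_ge0 //= -subr_ge0 subr1_share_fraction divr_ge0.
Qed.

Lemma share_fraction_gt0 i : 0 < share (s i) p.
Proof.
rewrite /share; case: ifPn => si.
  by rewrite divr_gt0 ?ltr0n //; apply/card_gt0P; exists i.
rewrite subr1_share_fraction divr_gt0 ?ltr0n //.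
by apply/card_gt0P; exists i; rewrite inE.
Qed.

Lemma sum_share_ratio_le e : 0 <= e <= 1 ->
  \sum_i share (s i) e / share (s i) p <= #|I|%:R.
Proof.
move=> /andP[e0 e1]; have n0 : 0 < #|I|%:R :> R by rewrite ltr0n.
have e1' : 0 <= 1 - e by rewrite subr_ge0.
rewrite (sum_by_tier (fun b => share b e / share b p)) /share.
rewrite subr1_share_fraction {1}/share_fraction.
apply: le_trans
  (lerD (mulr_div_ratio_le _ n0 e0) (mulr_div_ratio_le _ n0 e1')) _.
by rewrite -mulrDl addrC subrK mul1r.
Qed.

Lemma share_utility_fraction : share_utility p = (\sum_i ln (share (s i) p))%:E.
Proof.
rewrite /share_utility -sumEFin.
by apply: eq_bigr => i _; rewrite /elog share_fraction_gt0.
Qed.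

Lemma share_utility_lt e : 0 <= e <= 1 -> e != p ->
  (share_utility e < share_utility p)%E.
Proof.
move=> e01 ep; rewrite share_utility_fraction.
apply: sum_elog_lt; [exact: share_fraction_gt0 | exact: sum_share_ratio_le |].
have [i0 _] := card_gt0P I_gt0.
by exists i0; apply: contra_neq ep; apply: share_inj.
Qed.

Local Open Scope classical_set_scope.

Lemma share_utility_argmax :
  [set e : R | 0 <= e <= 1 /\ forall e' : R, 0 <= e' <= 1 ->
     (share_utility e' <= share_utility e)%E] = [set p].
Proof.
apply/seteqP; split=> e /=.
  move=> [e01 e_max]; have [//|ep] := eqVneq e p.
  by have := share_utility_lt e01 ep; rewrite ltNge e_max // share_fraction_itv.
move=> ->; split=> [|e' e01]; first exact: share_fraction_itv.
by have [->//|e'p] := eqVneq e' p; exact/ltW/share_utility_lt.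
Qed.

End TierShare.

Section Association.
Variables (R : realType) (K : nat) (B : finType) (sat : pred B).
Variables (x r : 'I_K -> B -> R).
Hypothesis x01 : forall i j, x i j = 0 \/ x i j = 1.
Hypothesis x_sum1 : forall i, \sum_j x i j = 1.

Lemma served_exists i : exists j, x i j == 1.
Proof.
have [/existsP//|/existsPn none] := boolP [exists j, x i j == 1].
have : \sum_j x i j = 0.
  by apply: big1 => j _; case: (x01 i j) => // /eqP; rewrite (negbTE (none j)).
by rewrite x_sum1 => /eqP; rewrite oner_eq0.
Qed.

Definition server i : B := xchoose (served_exists i).

Definition served_by_sat : pred 'I_K := fun i => sat (server i).

Lemma x_server i : x i (server i) = 1.
Proof. exact/eqP/(xchooseP (served_exists i)). Qed.

Lemma x_not_server i j : j != server i -> x i j = 0.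
Proof.
have := x_sum1 i; rewrite (bigD1 (server i)) //= x_server.
move=> /(canRL (addKr 1)); rewrite addNr => others0 j_ns.
by apply: (psumr_eq0P _ others0) => // k _; case: (x01 i k) => ->.
Qed.

Lemma throughput_server e i :
  throughput sat x r e i = share (sat (server i)) e * r i (server i).
Proof.
have -> : throughput sat x r e i = \sum_j share (sat j) e * x i j * r i j.
  rewrite /throughput [RHS](bigID sat) /=.
  by congr (_ + _); apply: eq_bigr => j; rewrite /share; case: (sat j).
rewrite (bigD1 (server i)) //= big1 ?addr0 ?x_server ?mulr1 // => j j_ns.
by rewrite x_not_server // mulr0 mul0r.
Qed.

Lemma K_sat_server : K_sat sat x = #|served_by_sat|.
Proof.
apply: eq_card => i; rewrite inE /served_by_sat unfold_in /=.
apply/existsP/idP => [[j /andP[sat_j /eqP x_ij]] | sat_i].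
  have [j_s|j_ns] := eqVneq j (server i); first by move: sat_j; rewrite j_s.
  by move: x_ij; rewrite x_not_server // => /eqP; rewrite eq_sym oner_eq0.
by exists (server i); rewrite sat_i x_server eqxx.
Qed.

Lemma utility_server e : (forall i j, 0 < r i j) ->
  utility sat x r e
  = (share_utility served_by_sat e + (\sum_i ln (r i (server i)))%:E)%E.
Proof.
move=> r_gt0; rewrite /utility /share_utility -sumEFin -big_split /=.
by apply: eq_bigr => i _; rewrite throughput_server elog_mulr.
Qed.

End Association.

Local Open Scope classical_set_scope.

Theorem proposition2 (R : realType) (K : nat) (B : finType) (sat : pred B)
  (x r : 'I_K -> B -> R)
  (hK : (1 <= K)%N)
  (hx01 : forall i j, x i j = 0 \/ x i j = 1)
  (hxsum : forall i, \sum_(j : B) x i j = 1)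
  (hr : forall i j, 0 < r i j) :
  [set e : R | 0 <= e <= 1 /\
     (forall e' : R, 0 <= e' <= 1 ->
        (utility sat x r e' <= utility sat x r e)%E)]
  = [set ((K_sat sat x)%:R / K%:R : R)].
Proof.
have users_gt0 : (0 < #|'I_K|)%N by rewrite card_ord.
have -> : (K_sat sat x)%:R / K%:R
          = share_fraction R (served_by_sat sat hx01 hxsum).
  by rewrite /share_fraction card_ord (K_sat_server sat hx01 hxsum).
rewrite -share_utility_argmax //.
under eq_set => e do under eq_forall => e' do
  rewrite !(utility_server sat hx01 hxsum _ hr) leeD2rE //.
by [].
Qed.
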